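(* Let $E$ be a field and $F$ a field extension of $E$. Let $X=(x_1,\dots,x_n)$ and let $$\sigma=\sum_{I\in\mathbb N^n}\alpha_IX^I\in F[[X]],\qquad \alpha_I\in F,$$ where $X^I=x_1^{i_1}\cdots x_n^{i_n}$ for $I=(i_1,\dots,i_n)$. For $1\le l\le n$ and $I\in\mathbb N^n$ define the one-variable series $$a_{I,l}=\sum_{j=0}^\infty \alpha_{J}x_l^j\in F[[x_l]],\qquad J=(i_1,\dots,i_{l-1},j,i_{l+1},\dots,i_n).$$ If $\sigma$ is algebraic over $E((X))$ (the fraction field of $E[[X]]$, viewed inside the fraction field of $F[[X]]$), then $a_{I,l}$ is algebraic over $E((x_l))$ for every $1\le l\le n$ and every $I\in\mathbb N^n$. *)

From HB Require Import structures.
From mathcomp Require Import all_boot all_order all_algebra.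
Set Implicit Arguments. Unset Strict Implicit. Unset Printing Implicit Defensive.
Import Order.TTheory GRing.Theory Num.Theory.
Local Open Scope ring_scope.

Definition mindex (n : nat) := {ffun 'I_n -> nat}.

Definition mseries (R : Type) (n : nat) := mindex n -> R.

Definition mbound n (I : mindex n) : nat := (\max_(i < n) I i)%N.

(* Cauchy product: (s*t)(I) = sum_{J <= I componentwise} s(J) t(I-J). *)
Definition ms_mul (R : pzRingType) n (s t : mseries R n) : mseries R n :=
  fun I => \sum_(J : {ffun 'I_n -> 'I_(mbound I).+1} | [forall i, (J i <= I i)%N])
             s [ffun i => nat_of_ord (J i)] * t [ffun i => (I i - J i)%N].

Definition ms_one (R : pzRingType) n : mseries R n :=
  fun I => if [forall i, I i == 0%N] then 1 else 0.

Definition ms_exp (R : pzRingType) n (s : mseries R n) (k : nat) : mseries R n :=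
  iter k (ms_mul s) (@ms_one R n).

Definition ms_map (E F : Type) (f : E -> F) n (s : mseries E n) : mseries F n :=
  fun I => f (s I).

(* s in F[[X]] is algebraic over E((X)) = Frac(E[[X]]), where E is embedded
   in F by the field morphism iota.  After clearing denominators this means:
   there is a polynomial sum_{k<=d} c_k Y^k with coefficients c_k in E[[X]],
   not all zero, such that sum_k c_k s^k = 0 in F[[X]]. *)
Definition ms_algebraic (E F : fieldType) (iota : {rmorphism E -> F}) n
  (s : mseries F n) : Prop :=
  exists (d : nat) (c : nat -> mseries E n),
    (exists k I, (k <= d)%N /\ c k I != 0) /\
    forall I, \sum_(k < d.+1) ms_mul (ms_map iota (c k)) (ms_exp s k) I = 0.

Definition slice_series (F : Type) n (alpha : mseries F n) (I : mindex n) (l : 'I_n)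
  : mseries F 1 :=
  fun J => alpha [ffun k => if k == l then J ord0 else I k].

From HB Require Import structures.
From mathcomp Require Import all_boot all_order all_algebra.
From mathcomp Require Import boolp zify ring.
Set Implicit Arguments. Unset Strict Implicit. Unset Printing Implicit Defensive.
Import GRing.Theory.
Local Open Scope ring_scope.

(* An element u of F[[X]] is algebraic over E((X)) = Frac(E[[X]]) iff a * u is
   integral over E[[X]] for some nonzero a in E[[X]]; since E[[X]] is a domain,
   such elements are closed under subtraction and under cancelling nonzero
   factors from E[[X]].  Substituting x_j := 0 is a ring endomorphism, and it
   preserves algebraicity once the coefficients of an algebraic relation are
   divided by the least power of x_j occurring in them.  Hence
   (s - s(x_j := 0)) / x_j is algebraic along with s, and iterating these two
   operations extracts from sigma the coefficient of the monomial
   prod_(j <> l) x_j^(i_j), which is a_{I,l} seen in F[[X]].  Finally, a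
   relation for a series in x_l alone, read off along a fixed choice of the
   other exponents at which some coefficient does not vanish, is a relation
   over E[[x_l]]. *)

Section MultiIndex.
Variable n : nat.
Implicit Types I J K L : mindex n.

Definition madd I J : mindex n := [ffun i => (I i + J i)%N].
Definition msub I J : mindex n := [ffun i => (I i - J i)%N].
Definition mle J I : bool := [forall i, (J i <= I i)%N].
Definition mzero : mindex n := [ffun _ => 0%N].
Definition mvar (j : 'I_n) (m : nat) : mindex n := [ffun i => if i == j then m else 0%N].

Definition mbox I : seq (mindex n) :=
  map (fun Z : {ffun 'I_n -> 'I_(mbound I).+1} => [ffun i => nat_of_ord (Z i)] : mindex n)
    (enum [pred Z : {ffun 'I_n -> 'I_(mbound I).+1} | [forall i, (Z i <= I i)%N]]).

Lemma mleP J I : reflect (forall i, (J i <= I i)%N) (mle J I).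
Proof. exact: forallP. Qed.

Lemma mle_trans J I K : mle J I -> mle I K -> mle J K.
Proof. by move=> /mleP h1 /mleP h2; apply/mleP => i; apply: leq_trans (h1 i) (h2 i). Qed.

Lemma mbound_ge I i : (I i <= mbound I)%N.
Proof. exact: (@leq_bigmax _ (fun i => I i) i). Qed.

Lemma mem_mbox I J : (J \in mbox I) = mle J I.
Proof.
have ltJ i : mle J I -> (J i < (mbound I).+1)%N.
  by move=> /mleP hJ; rewrite ltnS (leq_trans (hJ i) (mbound_ge _ _)).
apply/mapP/idP.
  by case=> K; rewrite mem_enum inE => /forallP hK ->; apply/mleP => i; rewrite ffunE.
move=> hJ; exists [ffun i => inord (J i) : 'I_(mbound I).+1].
  by rewrite mem_enum inE; apply/forallP => i; rewrite ffunE inordK ?ltJ //; apply/mleP.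
by apply/ffunP => i; rewrite !ffunE inordK ?ltJ.
Qed.

Lemma mbox_uniq I : uniq (mbox I).
Proof.
rewrite map_inj_uniq ?enum_uniq // => J K /ffunP eqJK; apply/ffunP => i.
by apply: val_inj; have := eqJK i; rewrite !ffunE.
Qed.

Lemma perm_mbox I s : uniq s -> (forall J, (J \in s) = mle J I) -> perm_eq s (mbox I).
Proof. by move=> us hs; apply: uniq_perm => // [|J]; rewrite ?mbox_uniq ?hs ?mem_mbox. Qed.

Lemma mem_mbox0 I : mzero \in mbox I.
Proof. by rewrite mem_mbox; apply/mleP => i; rewrite ffunE. Qed.

Lemma mzero_forallE J : [forall i, J i == 0%N] = (J == mzero).
Proof.
apply/forallP/eqP => [h|-> i]; last by rewrite ffunE.
by apply/ffunP => i; rewrite ffunE; apply/eqP.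
Qed.

Lemma maddK J K : msub (madd J K) J = K.
Proof. by apply/ffunP => i; rewrite !ffunE addKn. Qed.

Lemma msubD I J K : msub I (madd J K) = msub (msub I J) K.
Proof. by apply/ffunP => i; rewrite !ffunE subnDA. Qed.

Lemma msubK I J : mle J I -> msub I (msub I J) = J.
Proof. by move=> /mleP h; apply/ffunP => i; rewrite !ffunE subKn. Qed.

Lemma msub0 I : msub I mzero = I.
Proof. by apply/ffunP => i; rewrite !ffunE subn0. Qed.

Lemma madd_inj J : injective (madd J).
Proof. by move=> K L /ffunP h; apply/ffunP => i; have := h i; rewrite !ffunE => /addnI. Qed.

Lemma big_mbox_sub (V : zmodType) (f : mindex n -> V) I L : mle L I ->
  \sum_(K <- mbox L) f K = \sum_(K <- mbox I | mle K L) f K.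
Proof.
move=> hLI; rewrite -[RHS]big_filter; apply/esym/perm_big/perm_mbox.
  by rewrite filter_uniq ?mbox_uniq.
move=> K; rewrite mem_filter mem_mbox andbC.
by case hKL: (mle K L); rewrite ?andbF // (mle_trans hKL hLI).
Qed.

Lemma mbox_shift I J : mle J I ->
  perm_eq [seq madd J K | K <- mbox (msub I J)] [seq L <- mbox I | mle J L].
Proof.
move=> /mleP hJI; apply: uniq_perm.
- by rewrite map_inj_uniq ?mbox_uniq //; apply: madd_inj.
- by rewrite filter_uniq ?mbox_uniq.
move=> L; rewrite mem_filter mem_mbox; apply/mapP/andP.
  case=> K; rewrite mem_mbox => /mleP hK ->; split; apply/mleP => i; rewrite !ffunE //.
    exact: leq_addr.
  by have := hK i; have := hJI i; rewrite ffunE; lia.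
move=> [/mleP h1 /mleP h2]; exists (msub L J).
  by rewrite mem_mbox; apply/mleP => i; rewrite !ffunE; have := h1 i; have := h2 i; lia.
by apply/ffunP => i; rewrite !ffunE subnKC.
Qed.

Lemma mbox_rev I : perm_eq [seq msub I J | J <- mbox I] (mbox I).
Proof.
apply: perm_mbox.
  rewrite map_inj_in_uniq ?mbox_uniq // => J K; rewrite !mem_mbox => /mleP h1 /mleP h2 /ffunP h.
  apply/ffunP => i; have := h i; rewrite !ffunE => e.
  by rewrite -(subKn (h1 i)) e subKn.
move=> J; apply/mapP/mleP => [[K _ ->] i|h]; first by rewrite ffunE leq_subr.
exists (msub I J); last by apply/ffunP => i; rewrite !ffunE subKn.
by rewrite mem_mbox; apply/mleP => i; rewrite ffunE leq_subr.
Qed.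

Lemma ms_mulE (R : pzRingType) (s t : mseries R n) I :
  ms_mul s t I = \sum_(J <- mbox I) s J * t (msub I J).
Proof.
rewrite /ms_mul /mbox big_map big_filter /index_enum -enumT /=.
apply: eq_big => [J|J _]; first by rewrite inE.
by congr (_ * t _); apply/ffunP => i; rewrite !ffunE.
Qed.

End MultiIndex.

(* A copy of [mseries] carrying the ring structure of F[[X]]. *)
Definition pser (R : Type) (n : nat) : Type := mseries R n.
HB.instance Definition _ (R : Type) n := gen_eqMixin (pser R n).
HB.instance Definition _ (R : Type) n := gen_choiceMixin (pser R n).

Section PserZmod.
Variables (R : zmodType) (n : nat).
Implicit Types s t u : pser R n.

Definition pser_add s t : pser R n := fun I => s I + t I.
Definition pser_opp s : pser R n := fun I => - s I.

Lemma pser_addA : associative pser_add.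
Proof. by move=> s t u; apply: funext => I; rewrite /pser_add addrA. Qed.
Lemma pser_addC : commutative pser_add.
Proof. by move=> s t; apply: funext => I; rewrite /pser_add addrC. Qed.
Lemma pser_add0 : left_id (fun _ => 0) pser_add.
Proof. by move=> s; apply: funext => I; rewrite /pser_add add0r. Qed.
Lemma pser_addN : left_inverse (fun _ => 0) pser_opp pser_add.
Proof. by move=> s; apply: funext => I; rewrite /pser_add /pser_opp addNr. Qed.

HB.instance Definition _ :=
  GRing.isZmodule.Build (pser R n) pser_addA pser_addC pser_add0 pser_addN.

Lemma pser0E I : (0 : pser R n) I = 0. Proof. by []. Qed.
Lemma pserBE s t I : (s - t) I = s I - t I. Proof. by []. Qed.
Lemma pser_sumE (T : Type) (r : seq T) (P : pred T) (F : T -> pser R n) I :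
  (\sum_(i <- r | P i) F i) I = \sum_(i <- r | P i) F i I.
Proof. by elim/big_rec2: _ => // i y1 y2 _ <-. Qed.

Lemma pser_neq0 s : s != 0 -> exists I, s I != 0.
Proof.
move=> /eqP s_neq0; apply/not_existsP => s0; apply: s_neq0; apply: funext => I.
by apply/eqP/negbNE/negP => /s0.
Qed.

End PserZmod.

Section PserRing.
Variables (R : comNzRingType) (n : nat).
Implicit Types s t u : pser R n.

Lemma pser_mulA : associative (@ms_mul R n).
Proof.
move=> s t u; apply: funext => I; rewrite !ms_mulE.
under eq_bigr do rewrite ms_mulE.
under [RHS]eq_bigr do rewrite ms_mulE.
transitivity (\sum_(J <- mbox I) \sum_(L <- mbox I | mle J L)
                s J * (t (msub L J) * u (msub I L))).
  rewrite big_seq [RHS]big_seq; apply: eq_bigr => J; rewrite mem_mbox => hJ.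
  rewrite mulr_sumr -[RHS]big_filter -(perm_big _ (mbox_shift hJ)) [RHS]big_map.
  by apply: eq_bigr => K _; rewrite maddK msubD.
rewrite (exchange_big_dep xpredT) //= big_seq [RHS]big_seq.
apply: eq_bigr => L; rewrite mem_mbox => hL.
by rewrite (big_mbox_sub _ hL) mulr_suml; apply: eq_bigr => J _; rewrite mulrA.
Qed.

Lemma pser_mulC : commutative (@ms_mul R n).
Proof.
move=> s t; apply: funext => I; rewrite !ms_mulE.
rewrite -[RHS](perm_big _ (mbox_rev I)) [RHS]big_map big_seq [RHS]big_seq.
by apply: eq_bigr => J; rewrite mem_mbox => hJ; rewrite msubK // mulrC.
Qed.

Lemma pser_mul1 : left_id (@ms_one R n) (@ms_mul R n).
Proof.
move=> s; apply: funext => I; rewrite ms_mulE.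
rewrite (bigD1_seq (mzero n)) ?mem_mbox0 ?mbox_uniq //= /ms_one mzero_forallE eqxx mul1r msub0.
by rewrite big1 ?addr0 // => J hJ; rewrite mzero_forallE (negbTE hJ) mul0r.
Qed.

Lemma pser_mulDl : left_distributive (@ms_mul R n) (@pser_add R n).
Proof.
move=> s t u; apply: funext => I; rewrite /pser_add !ms_mulE -big_split /=.
by apply: eq_bigr => J _; rewrite mulrDl.
Qed.

Lemma pser_one_neq0 : (@ms_one R n : pser R n) != 0.
Proof.
apply/eqP => /(congr1 (fun f => f (mzero n))); rewrite /ms_one mzero_forallE eqxx.
by move/eqP; rewrite oner_eq0.
Qed.

HB.instance Definition _ := GRing.Zmodule_isComNzRing.Build (pser R n)
  pser_mulA pser_mulC pser_mul1 pser_mulDl pser_one_neq0.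

Lemma pserME s t : s * t = ms_mul s t. Proof. by []. Qed.
Lemma pser1E : (1 : pser R n) = @ms_one R n. Proof. by []. Qed.
Lemma pserXE s k : s ^+ k = ms_exp s k.
Proof. by elim: k => [|k IH]; rewrite ?expr0 // exprS IH. Qed.

End PserRing.

Section PserMap.
Variables (E F : comNzRingType) (f : {rmorphism E -> F}) (n : nat).

Definition pser_map (s : pser E n) : pser F n := ms_map f s.

Lemma pser_map_zmod : zmod_morphism pser_map.
Proof. by move=> s t; apply: funext => I; rewrite /pser_map /ms_map pserBE rmorphB. Qed.

Lemma pser_map_monoid : monoid_morphism pser_map.
Proof.
split.
  by apply: funext => I; rewrite /pser_map /ms_map /= !pser1E /ms_one; case: ifP; rewrite ?rmorph1 ?rmorph0.
move=> s t; apply: funext => I; rewrite /pser_map /ms_map !pserME !ms_mulE rmorph_sum.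
by apply: eq_bigr => J _; rewrite rmorphM.
Qed.

HB.instance Definition _ :=
  GRing.isZmodMorphism.Build (pser E n) (pser F n) pser_map pser_map_zmod.
HB.instance Definition _ :=
  GRing.isMonoidMorphism.Build (pser E n) (pser F n) pser_map pser_map_monoid.

Lemma pser_mapE s I : pser_map s I = f (s I). Proof. by []. Qed.

End PserMap.

Section Monomial.
Variables (R : comNzRingType) (n : nat).

Definition monomial (M : mindex n) : pser R n := fun I => if I == M then 1 else 0.

Lemma mul_monomialE M (s : pser R n) I :
  (monomial M * s) I = if mle M I then s (msub I M) else 0.
Proof.
rewrite pserME ms_mulE; case: ifP => hM.
  rewrite (bigD1_seq M) ?mem_mbox ?mbox_uniq //= /monomial eqxx mul1r big1 ?addr0 //.
  by move=> J /negbTE ->; rewrite mul0r.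
rewrite big_seq big1 // => J; rewrite mem_mbox /monomial => hJ.
by case: eqP => [eJ|_]; rewrite ?mul0r //; move: hJ hM; rewrite eJ => ->.
Qed.

Lemma monomial_neq0 M : monomial M != 0.
Proof.
apply/eqP => /(congr1 (fun g => g M)); rewrite /monomial eqxx pser0E.
by move/eqP; rewrite oner_eq0.
Qed.

Lemma mul_monomialI M (s : pser R n) : monomial M * s = 0 -> s = 0.
Proof.
move=> h; apply: funext => I; have := congr1 (fun g => g (madd M I)) h.
rewrite mul_monomialE pser0E maddK; case: ifP => // /negP[]; apply/mleP => i.
by rewrite ffunE leq_addr.
Qed.

End Monomial.

Lemma pser_map_monomial (E F : comNzRingType) (f : {rmorphism E -> F}) n M :
  pser_map f (monomial E M) = monomial F M :> pser F n.
Proof.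
by apply: funext => I; rewrite pser_mapE /monomial; case: ifP; rewrite ?rmorph0 ?rmorph1.
Qed.

Section Domain.
Variable n : nat.

Definition lex_min (P : mindex n -> Prop) k (I0 : mindex n) :=
  P I0 /\ forall I, P I ->
    (forall i : 'I_n, (i < k)%N -> I i = I0 i) \/
    (exists i : 'I_n, [/\ (i < k)%N, (I0 i < I i)%N &
        forall i' : 'I_n, (i' < i)%N -> I i' = I0 i']).

Lemma lex_min_exists P k : (exists I, P I) -> exists I0, lex_min P k I0.
Proof.
move=> [Ia PIa]; elim: k => [|k [I0 [PI0 hI0]]]; first by exists Ia; split=> // I _; left.
case: (ltnP k n) => [hk|hk]; last first.
  exists I0; split=> // I /hI0 [h|[i [h1 h2 h3]]].
    by left=> i _; apply: h; apply: leq_trans (ltn_ord i) hk.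
  by right; exists i; split=> //; apply: ltnW.
pose kk := Ordinal hk.
pose Q I := P I /\ forall i : 'I_n, (i < k)%N -> I i = I0 i.
have hex : exists m, `[< exists I, Q I /\ I kk = m >] by exists (I0 kk); apply/asboolP; exists I0.
case: (ex_minnP hex) => m /asboolP [I1 [[PI1 agr] e]] hmin.
exists I1; split=> // I PI.
case: (hI0 I PI) => [h|[i [h1 h2 h3]]]; last first.
  right; exists i; split; [exact: ltnW | by rewrite agr |].
  by move=> i' hi'; rewrite h3 // agr //; apply: ltn_trans hi' h1.
have hm : (m <= I kk)%N by apply: hmin; apply/asboolP; exists I.
case: (ltngtP m (I kk)) hm => // [lt|eq] _.
  right; exists kk; split; rewrite ?e //.
  by move=> i' hi'; rewrite h // agr.
left=> i; rewrite ltnS leq_eqVlt => /orP[/eqP hi|hi]; last by rewrite h // agr.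
have -> : i = kk by apply: val_inj.
by rewrite e.
Qed.

(* The lexicographically least exponents of s and t add up to an exponent of
   s * t which receives no other contribution. *)
Lemma lex_min_mul (R : idomainType) (s t : pser R n) I0 J0 :
  lex_min (fun I => s I != 0) n I0 -> lex_min (fun I => t I != 0) n J0 ->
  (s * t) (madd I0 J0) = s I0 * t J0.
Proof.
move=> [sI0 hI0] [tJ0 hJ0]; rewrite pserME ms_mulE.
rewrite (bigD1_seq I0) ?mbox_uniq //=; last first.
  by rewrite mem_mbox; apply/mleP => i; rewrite ffunE leq_addr.
rewrite maddK big_seq_cond big1 ?addr0 // => J /andP[]; rewrite mem_mbox => /mleP hJ hJI0.
case: (eqVneq (s J) 0) => [->|sJ]; first by rewrite mul0r.
set K := msub (madd I0 J0) J.
case: (eqVneq (t K) 0) => [->|tK]; first by rewrite mulr0.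
exfalso; case: (hI0 J sJ) => [h|[i [_ lt1 ag1]]].
  by move/eqP: hJI0; apply; apply/ffunP => i; apply: h.
have hKi : (K i < J0 i)%N by have := hJ i; rewrite /K !ffunE; move: lt1; lia.
case: (hJ0 K tK) => [h|[i' [_ lt2 ag2]]]; first by move: hKi; rewrite h // ltnn.
case: (ltngtP i i') => [lt|lt|eq].
- by move: hKi; rewrite ag2 // ltnn.
- by move: lt2; rewrite /K !ffunE (ag1 _ lt); lia.
- by move: lt2; rewrite (_ : i' = i) ?ltnNge; [rewrite ltnW | apply: val_inj].
Qed.

Lemma pser_mulf_neq0 (R : idomainType) (s t : pser R n) :
  s != 0 -> t != 0 -> s * t != 0.
Proof.
move=> /pser_neq0 /(lex_min_exists n) [I0 hI0] /pser_neq0 /(lex_min_exists n) [J0 hJ0].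
apply/eqP => /(congr1 (fun g => g (madd I0 J0))); rewrite (lex_min_mul hI0 hJ0) pser0E.
by move/eqP; rewrite mulf_eq0; case: hI0 => /negbTE -> _; case: hJ0 => /negbTE -> _.
Qed.

Lemma pser_expf_neq0 (R : idomainType) (s : pser R n) k : s != 0 -> s ^+ k != 0.
Proof.
move=> s_neq0; elim: k => [|k IH]; first by rewrite expr0 oner_neq0.
by rewrite exprS pser_mulf_neq0.
Qed.

End Domain.

Section Subst0.
Variables (R : comNzRingType) (n : nat) (j : 'I_n).

Definition subst0 (s : pser R n) : pser R n := fun I => if I j == 0%N then s I else 0.

Lemma subst0_zmod : zmod_morphism subst0.
Proof. by move=> s t; apply: funext => I; rewrite /subst0 !pserBE; case: ifP; rewrite ?subr0. Qed.

Lemma subst0_monoid : monoid_morphism subst0.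
Proof.
split.
  apply: funext => I; rewrite /subst0 pser1E /ms_one; case: eqP => // hI.
  by case: ifP => // /forallP /(_ j) /eqP.
move=> s t; apply: funext => I; rewrite /subst0 !pserME !ms_mulE.
case: eqP => hI.
  rewrite big_seq [RHS]big_seq; apply: eq_bigr => J; rewrite mem_mbox => /mleP hJ.
  have hJj : J j = 0%N by apply/eqP; rewrite -leqn0 -hI hJ.
  by rewrite hJj eqxx ffunE hI hJj.
rewrite big_seq big1 // => J; rewrite mem_mbox => /mleP hJ.
case: eqP => hJj; rewrite ?mul0r // ffunE hJj subn0.
by move/eqP/negbTE: hI => ->; rewrite mulr0.
Qed.

HB.instance Definition _ :=
  GRing.isZmodMorphism.Build (pser R n) (pser R n) subst0 subst0_zmod.
HB.instance Definition _ :=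
  GRing.isMonoidMorphism.Build (pser R n) (pser R n) subst0 subst0_monoid.

End Subst0.

Lemma pser_map_subst0 (E F : comNzRingType) (f : {rmorphism E -> F}) n j s :
  pser_map f (subst0 j s) = subst0 j (pser_map f s) :> pser F n.
Proof. by apply: funext => I; rewrite /subst0 !pser_mapE; case: ifP; rewrite ?rmorph0. Qed.

Section Algebraic.
Variables (E F : fieldType) (iota : {rmorphism E -> F}) (n : nat).
Local Notation phi := (@pser_map _ _ iota n).

Definition has_alg_rel (s : pser F n) := exists d (c : nat -> pser E n),
  (exists k, (k <= d)%N /\ c k != 0) /\ \sum_(k < d.+1) phi (c k) * s ^+ k = 0.

Lemma ms_algebraicE (s : pser F n) : ms_algebraic iota s <-> has_alg_rel s.
Proof.
have relE d c : \sum_(k < d.+1) phi (c k) * s ^+ k =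
                (fun I => \sum_(k < d.+1) ms_mul (ms_map iota (c k)) (ms_exp s k) I).
  by apply: funext => I; rewrite pser_sumE; apply: eq_bigr => k _; rewrite pserME pserXE.
split=> [[d [c [[k [I [hk hI]]] hrel]]] | [d [c [[k [hk /pser_neq0 [I hI]]] hrel]]]].
  exists d, c; split; last by rewrite relE; apply: funext.
  by exists k; split=> //; apply: contraNneq hI => ->.
exists d, c; split; first by exists k, I.
by move=> J; rewrite -[RHS](pser0E _ J) -hrel relE.
Qed.

Lemma pser_map_eq0 (a : pser E n) : (phi a == 0) = (a == 0).
Proof.
apply/eqP/eqP => [h|->]; last exact: rmorph0.
apply: funext => I; have := congr1 (fun g => g I) h.
by rewrite pser_mapE pser0E => /eqP; rewrite fmorph_eq0 => /eqP.
Qed.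

(* Divide every coefficient by the least power x_j^m occurring in one of them,
   so that the relation does not collapse under x_j := 0. *)
Lemma has_alg_rel_subst0 j s : has_alg_rel s -> has_alg_rel (subst0 j s).
Proof.
move=> [d [c [[k0 [hk0 /pser_neq0 [I0 hI0]]] hrel]]].
have hex : exists m, `[< exists k I, [/\ (k <= d)%N, c k I != 0 & I j = m] >].
  by exists (I0 j); apply/asboolP; exists k0, I0.
case: (ex_minnP hex) => m /asboolP [k1 [I1 [hk1 hcI1 hI1j]]] hmin.
pose c' k : pser E n := fun I => c k (madd (mvar j m) I).
have c_factor k : (k <= d)%N -> c k = monomial E (mvar j m) * c' k.
  move=> hk; apply: funext => I; rewrite mul_monomialE; case: ifP => hMI.
    congr (c k _); apply/ffunP => i; rewrite !ffunE.
    by move/mleP: hMI => /(_ i); rewrite ffunE => h; rewrite subnKC.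
  apply/eqP; apply: contraFT hMI => hkI.
  have hm : (m <= I j)%N by apply: hmin; apply/asboolP; exists k, I.
  by apply/mleP => i; rewrite ffunE; case: eqP => [->|].
have hrel' : \sum_(k < d.+1) phi (c' k) * s ^+ k = 0.
  apply: (@mul_monomialI _ _ (mvar j m)); rewrite mulr_sumr -[RHS]hrel.
  apply: eq_bigr => k _.
  by rewrite mulrA -(pser_map_monomial iota) -rmorphM -c_factor // -ltnS ltn_ord.
exists d, (fun k => subst0 j (c' k)); split.
  exists k1; split=> //; apply/eqP => /(congr1 (fun g => g [ffun i => if i == j then 0%N else I1 i])).
  rewrite /subst0 pser0E ffunE eqxx /c' => /eqP; apply/negP; move: hcI1.
  congr (c k1 _ != 0); apply/ffunP => i; rewrite !ffunE; case: eqP => [->|] //.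
  by rewrite hI1j addn0.
have := congr1 (subst0 j) hrel'; rewrite rmorph_sum rmorph0 => rel0; rewrite -[RHS]rel0.
by apply: eq_bigr => k _; rewrite rmorphM rmorphXn pser_map_subst0.
Qed.

Lemma has_alg_rel_lead s : has_alg_rel s ->
  exists d (c : nat -> pser E n), c d != 0 /\ \sum_(k < d.+1) phi (c k) * s ^+ k = 0.
Proof.
move=> [d [c [[k0 [hk0 hc0]] hrel]]].
have hex : exists k, (k <= d)%N && (c k != 0) by exists k0; rewrite hk0.
have ub k : (k <= d)%N && (c k != 0) -> (k <= d)%N by case/andP.
case: (ex_maxnP hex ub) => D /andP[hDd hcD] hmax.
exists D, c; split=> //; rewrite -[RHS]hrel.
rewrite -!(big_mkord xpredT (fun k => phi (c k) * s ^+ k)) [RHS](@big_cat_nat _ _ _ D.+1) //=.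
rewrite [X in _ = _ + X]big_nat_cond [X in _ = _ + X]big1 ?addr0 // => k /andP[/andP[hDk hkd] _].
case: (eqVneq (c k) 0) => [->|hck]; first by rewrite rmorph0 mul0r.
by have := hmax k; rewrite -ltnS hkd hck => /(_ isT); rewrite leqNgt hDk.
Qed.

Definition algebraic (u : pser F n) :=
  exists2 a : pser E n, a != 0 & integralOver phi (phi a * u).

(* Multiplying a relation of degree d + 1 with leading coefficient a by a^d
   makes it a monic relation for a * u. *)
Lemma has_alg_rel_algebraic u : has_alg_rel u -> algebraic u.
Proof.
move=> /has_alg_rel_lead [[|d] [c [hcd hrel]]].
  by move: hrel; rewrite big_ord1 expr0 mulr1 => /eqP; rewrite pser_map_eq0 (negbTE hcd).
set a := c d.+1; exists a => //.
pose p : {poly pser E n} := \poly_(i < d.+2) (if i == d.+1 then 1 else c i * a ^+ (d - i)).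
exists p; first by rewrite monicE lead_coef_poly //= ?eqxx ?oner_neq0.
rewrite /root /p poly_def rmorph_sum horner_sum; apply/eqP.
rewrite big_ord_recr /= eqxx map_polyZ map_polyXn hornerZ hornerXn rmorph1 mul1r.
transitivity (phi a ^+ d * \sum_(k < d.+2) phi (c k) * u ^+ k); last by rewrite hrel mulr0.
rewrite [X in _ = _ * X]big_ord_recr /= mulrDr exprMn exprSr !mulrA; congr (_ + _).
rewrite mulr_sumr; apply: eq_bigr => i _.
rewrite map_polyZ map_polyXn hornerZ hornerXn (ltn_eqF (ltn_ord i)) rmorphM rmorphXn.
have hi : (i <= d)%N by rewrite -ltnS.
by rewrite exprMn [RHS]mulrCA -mulrA; congr (_ * _); rewrite mulrA -exprD subnK.
Qed.

Lemma algebraic_has_alg_rel u : algebraic u -> has_alg_rel u.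
Proof.
move=> [a ha [p mp rp]].
have p_gt0 : (0 < size p)%N by rewrite size_poly_gt0 monic_neq0.
exists (size p).-1, (fun k => p`_k * a ^+ k); split.
  exists (size p).-1; split=> //.
  by rewrite -lead_coefE (eqP mp) mul1r pser_expf_neq0.
move: rp; rewrite /root horner_coef size_map_poly_id0 ?(eqP mp) ?rmorph1 ?oner_neq0 //.
move=> /eqP rel0; rewrite -[RHS]rel0 prednK //; apply: eq_bigr => i _.
by rewrite coef_map rmorphM rmorphXn exprMn mulrA.
Qed.

Lemma algebraicP u : has_alg_rel u <-> algebraic u.
Proof. by split; [apply: has_alg_rel_algebraic | apply: algebraic_has_alg_rel]. Qed.

Lemma algebraicB u v : algebraic u -> algebraic v -> algebraic (u - v).
Proof.
move=> [a ha hu] [b hb hv]; exists (a * b); first exact: pser_mulf_neq0.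
have -> : phi (a * b) * (u - v) = phi b * (phi a * u) - phi a * (phi b * v).
  by rewrite rmorphM; ring.
by apply: integral_sub; apply: integral_mul => //; apply: integral_id.
Qed.

Lemma algebraic_mulIl (b : pser E n) u : b != 0 -> algebraic (phi b * u) -> algebraic u.
Proof.
move=> hb [a ha hu]; exists (a * b); first exact: pser_mulf_neq0.
by rewrite rmorphM -mulrA.
Qed.

Lemma algebraic_subst0 j u : algebraic u -> algebraic (subst0 j u).
Proof. by move=> /algebraicP /has_alg_rel_subst0 /algebraicP. Qed.

End Algebraic.

Section CoefVar.
Variables (R : comNzRingType) (n : nat) (j : 'I_n).
Implicit Types s : pser R n.

Definition divx s : pser R n := fun I => s (madd (mvar j 1) I).

Lemma mul_divx s : monomial R (mvar j 1) * divx s = s - subst0 j s.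
Proof.
apply: funext => I; rewrite mul_monomialE pserBE /subst0 /divx.
case: ifP => [/mleP h|h].
  have hj : I j != 0%N by have := h j; rewrite ffunE eqxx; case: (I j).
  rewrite (negbTE hj) subr0; congr (s _); apply/ffunP => i; rewrite !ffunE.
  by rewrite subnKC //; have := h i; rewrite ffunE.
case: eqP => [_|hj]; first by rewrite subrr.
exfalso; move/negP: h; apply; apply/mleP => i; rewrite ffunE.
by case: eqP => [->|] //=; case: (I j) hj.
Qed.

Lemma iter_divxE m s I : iter m divx s I = s (madd (mvar j m) I).
Proof.
elim: m I => [|m IH] I /=.
  by congr (s _); apply/ffunP => i; rewrite !ffunE; case: ifP.
rewrite /divx IH; congr (s _); apply/ffunP => i; rewrite !ffunE.
by case: ifP => _ //=; rewrite addnA addn1.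
Qed.

Definition coef_var m s : pser R n := subst0 j (iter m divx s).

Lemma coef_varE m s I :
  coef_var m s I = if I j == 0%N then s (madd (mvar j m) I) else 0.
Proof. by rewrite /coef_var /subst0 iter_divxE. Qed.

End CoefVar.

Section CoefVars.
Variables (R : comNzRingType) (n : nat) (I : mindex n).

Definition coef_vars (S : seq 'I_n) (s : pser R n) : pser R n :=
  foldr (fun j => coef_var j (I j)) s S.

Lemma coef_varsE S s J : uniq S -> coef_vars S s J =
  if all (fun j => J j == 0%N) S
  then s [ffun k => if k \in S then (I k + J k)%N else J k] else 0.
Proof.
elim: S J => [|j S IH] J /=.
  by move=> _; congr (s _); apply/ffunP => k; rewrite ffunE.
move=> /andP[jS uS]; rewrite coef_varE IH //.
case: eqP => [hJj|//] /=.
set J' := madd _ J.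
have -> : all (fun k => J' k == 0%N) S = all (fun k => J k == 0%N) S.
  apply: eq_in_all => k kS; rewrite /J' !ffunE.
  by rewrite ifN ?add0n //; apply: contraNneq jS => <-.
case: ifP => // _; congr (s _); apply/ffunP => k; rewrite !ffunE in_cons.
by case: (eqVneq k j) => [->|hkj] /=; rewrite ?hJj ?addn0 ?(negbTE jS) ?add0n.
Qed.

End CoefVars.

Section AlgebraicCoefVars.
Variables (E F : fieldType) (iota : {rmorphism E -> F}) (n : nat).

Lemma algebraic_divx j (s : pser F n) : algebraic iota s -> algebraic iota (divx j s).
Proof.
move=> hs; apply: (@algebraic_mulIl _ _ iota n (monomial E (mvar j 1))).
  exact: monomial_neq0.
by rewrite pser_map_monomial mul_divx; apply: algebraicB => //; apply: algebraic_subst0.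
Qed.

Lemma algebraic_coef_vars I S (s : pser F n) :
  algebraic iota s -> algebraic iota (coef_vars I S s).
Proof.
move=> hs; elim: S => //= j S IH; apply: algebraic_subst0.
by elim: (I j) => //= m IHm; apply: algebraic_divx.
Qed.

End AlgebraicCoefVars.

Section EmbedVar.
Variables (R : comNzRingType) (n : nat) (l : 'I_n).

Definition on_axis (J : mindex n) : bool := [forall k, (k != l) ==> (J k == 0%N)].

Definition embed_var (w : pser R 1) : pser R n :=
  fun J => if on_axis J then w [ffun _ => J l] else 0.

Definition mset (J : mindex n) (t : mindex 1) : mindex n :=
  [ffun k => if k == l then t ord0 else J k].

Definition pser_section (J : mindex n) (c : pser R n) : pser R 1 := fun t => c (mset J t).

Lemma on_axis_mset J t : on_axis (mset J t) = on_axis J.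
Proof. by apply: eq_forallb => k; rewrite ffunE; case: eqP. Qed.

Lemma mset_axis J : mset J [ffun _ => J l] = J.
Proof. by apply/ffunP => k; rewrite !ffunE; case: eqP => [->|]. Qed.

Lemma mset_at_axis J t : [ffun _ => mset J t l] = t.
Proof. by apply/ffunP => i; rewrite !ffunE eqxx (ord1 i). Qed.

Lemma mbox_section J :
  perm_eq [seq mset J t | t <- mbox [ffun _ : 'I_1 => J l]]
          [seq K : mindex n <- mbox J | [forall k, (k != l) ==> (K k == J k)]].
Proof.
apply: uniq_perm.
- rewrite map_inj_uniq ?mbox_uniq // => t t' /ffunP /(_ l); rewrite !ffunE eqxx => e.
  by apply/ffunP => i; rewrite (ord1 i).
- by rewrite filter_uniq ?mbox_uniq.
move=> L; rewrite mem_filter mem_mbox; apply/mapP/andP.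
  case=> t; rewrite mem_mbox => /mleP ht ->; split.
    by apply/forallP => k; rewrite !ffunE; case: eqP => [->|_]; rewrite ?eqxx //=.
  apply/mleP => k; rewrite ffunE; case: eqP => [->|] //.
  by have := ht ord0; rewrite ffunE.
move=> [/forallP ha /mleP hl]; exists [ffun _ => L l].
  by rewrite mem_mbox; apply/mleP => i; rewrite !ffunE.
apply/ffunP => k; rewrite !ffunE; case: eqP => [->|/eqP hk] //.
by have := ha k; rewrite hk => /eqP.
Qed.

Lemma mul_embed_varE c w J :
  (c * embed_var w) J = (pser_section J c * w) [ffun _ => J l].
Proof.
rewrite !pserME !ms_mulE.
pose agree (K : mindex n) := [forall k, (k != l) ==> (K k == J k)].
transitivity (\sum_(K <- mbox J | agree K) c K * w [ffun _ => (J l - K l)%N]).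
  rewrite [RHS]big_mkcond big_seq [RHS]big_seq; apply: eq_bigr => K.
  rewrite mem_mbox => /mleP hK; rewrite /embed_var.
  have -> : on_axis (msub J K) = agree K.
    apply/forallP/forallP => h k; have := h k; rewrite !ffunE; case: (k != l) => //= /eqP.
      by move=> e; rewrite eqn_leq hK /= -subn_eq0 e.
    by move=> ->; rewrite subnn.
  by case: ifP; rewrite ?mulr0 // ffunE.
rewrite -big_filter -(perm_big _ (mbox_section J)) big_map; apply: eq_bigr => t _.
by rewrite /pser_section; congr (_ * w _); apply/ffunP => i; rewrite !ffunE (ord1 i) eqxx.
Qed.

Lemma embed_var_zmod : zmod_morphism embed_var.
Proof. by move=> v w; apply: funext => J; rewrite /embed_var !pserBE; case: ifP; rewrite ?subr0. Qed.

Lemma embed_var_monoid : monoid_morphism embed_var.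
Proof.
split.
  apply: funext => J; rewrite /embed_var !pser1E /ms_one.
  case hJ: (on_axis J).
    congr (if _ then _ else _); apply/forallP/forallP => h i.
      case: (eqVneq i l) => [->|hil]; first by have := h ord0; rewrite ffunE.
      by move/forallP: hJ => /(_ i); rewrite hil.
    by rewrite ffunE h.
  case: ifP => // /forallP h; exfalso; move/negP: hJ; apply; apply/forallP => k.
  by rewrite h implybT.
move=> v w; apply: funext => J; rewrite mul_embed_varE.
case hJ: (on_axis J).
  have -> : pser_section J (embed_var v) = v.
    by apply: funext => t; rewrite /pser_section /embed_var on_axis_mset hJ mset_at_axis.
  by rewrite /embed_var hJ mulrC.
have -> : pser_section J (embed_var v) = 0.
  by apply: funext => t; rewrite /pser_section /embed_var on_axis_mset hJ.
by rewrite mul0r /embed_var hJ.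
Qed.

HB.instance Definition _ :=
  GRing.isZmodMorphism.Build (pser R 1) (pser R n) embed_var embed_var_zmod.
HB.instance Definition _ :=
  GRing.isMonoidMorphism.Build (pser R 1) (pser R n) embed_var embed_var_monoid.

End EmbedVar.

Lemma pser_map_section (E F : comNzRingType) (f : {rmorphism E -> F}) n (l : 'I_n)
    (J : mindex n) (t : mindex 1) (c : pser E n) :
  pser_section l (mset l J t) (pser_map f c) = pser_map f (pser_section l J c) :> pser F 1.
Proof.
apply: funext => u; rewrite /pser_section !pser_mapE; congr (f (c _)).
by apply/ffunP => i; rewrite !ffunE; case: eqP.
Qed.

(* Read the relation along the exponents J0 of a nonvanishing coefficient. *)
Lemma has_alg_rel_embed_var (E F : fieldType) (iota : {rmorphism E -> F}) n l w :
  has_alg_rel iota (embed_var l w : pser F n) -> has_alg_rel iota w.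
Proof.
move=> [d [c [[k0 [hk0 /pser_neq0 [J0 hJ0]]] hrel]]].
exists d, (fun k => pser_section l J0 (c k)); split.
  exists k0; split=> //; apply: contraNneq hJ0 => /(congr1 (fun g => g [ffun _ => J0 l])).
  by rewrite /pser_section mset_axis pser0E => ->.
apply: funext => t; rewrite pser_sumE.
have := congr1 (fun g => g (mset l J0 t)) hrel; rewrite pser_sumE pser0E => rel0.
rewrite -[RHS]rel0; apply: eq_bigr => k _.
by rewrite -rmorphXn mul_embed_varE pser_map_section mset_at_axis.
Qed.

Lemma coef_vars_slice (R : comNzRingType) n (sigma : pser R n) l I :
  coef_vars I [seq j <- enum 'I_n | j != l] sigma = embed_var l (slice_series sigma I l).
Proof.
apply: funext => J; rewrite coef_varsE /embed_var; last by rewrite filter_uniq // enum_uniq.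
have -> : all (fun j => J j == 0%N) [seq j <- enum 'I_n | j != l] = on_axis l J.
  apply/allP/forallP => h k.
    by apply/implyP => hk; apply: h; rewrite mem_filter hk mem_enum.
  by rewrite mem_filter mem_enum => /andP[hk _]; move: (h k); rewrite hk.
case: ifP => // /forallP hJ; rewrite /slice_series; congr (sigma _).
apply/ffunP => k; rewrite !ffunE mem_filter mem_enum andbT.
case: (eqVneq k l) => [->|hk] //=.
by move: (hJ k); rewrite hk /= => /eqP ->; rewrite addn0.
Qed.

Theorem lemma3p1 (E F : fieldType) (iota : {rmorphism E -> F}) (n : nat)
  (sigma : mseries F n) :
  ms_algebraic iota sigma ->
  forall (l : 'I_n) (I : mindex n), ms_algebraic iota (slice_series sigma I l).
Proof.
move=> /ms_algebraicE /algebraicP alg_sigma l I.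
apply/ms_algebraicE/(@has_alg_rel_embed_var _ _ iota n l).
rewrite -coef_vars_slice; apply/algebraicP.
exact: algebraic_coef_vars.
Qed.
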